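(* Let $\mathcal{C}=(V,\mathcal{R})$ be a coherent configuration with fibers $X,Y$ such that $m=|X|=|Y|$ is a prime, $|\mathcal{R}_X|>2$ and $|\mathcal{R}_{X,Y}|>1$. If $S,T\in\mathcal{R}_{X,Y}$ and $R\in\mathcal{R}$ satisfy $ST^t=\{R\}$, then $c_{RR^t}^{R_1}\ge d_T$ for each $R_1\in SS^t$, and $c_{R^tR}^{R_2}\ge d_S$ for each $R_2\in TT^t$.
   Context: A coherent configuration is a pair $\mathcal{C}=(V,\mathcal{R})$ where $V$ is a finite set and $\mathcal{R}$ is a partition of $V\times V$ into nonempty sets such that: (1) the diagonal $\Delta_V$ is a union of members of $\mathcal{R}$; (2) for each $R\in\mathcal{R}$ its transpose $R^t=\{(u,v)\mid (v,u)\in R\}$ belongs to $\mathcal{R}$; (3) for all $R,S,T\in\mathcal{R}$ there is a constant $c_{RS}^T$ with $c_{RS}^T=|R(u)\cap S^t(v)|$ for all $(u,v)\in T$, where $T(w)=\{z\in V\mid (w,z)\in T\}$. A subset $X\subseteq V$ is a fiber if $\Delta_X\in\mathcal{R}$. For fibers $X,Y$, $\mathcal{R}_{X,Y}=\{R\in\mathcal{R}\mid R\subseteq X\times Y\}$, $\mathcal{R}_X=\mathcal{R}_{X,X}$, and for $R\in\mathcal{R}_{X,Y}$, $d_R=c_{RR^t}^{\Delta_X}=|R(x)|$ for any $x\in X$. Complex product: for $A,B\in\mathcal{R}$, $AB=\{R\in\mathcal{R}\mid c_{AB}^R>0\}$. *)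

From mathcomp Require Import all_boot.
Set Implicit Arguments. Unset Strict Implicit. Unset Printing Implicit Defensive.

Section CC.
Variable V : finType.

Definition rel_diag (X : {set V}) : {set V * V} :=
  [set p | (p.1 == p.2) && (p.1 \in X)].

Definition rel_tr (A : {set V * V}) : {set V * V} := [set p | (p.2, p.1) \in A].

Definition nbr (A : {set V * V}) (u : V) : {set V} := [set z | (u, z) \in A].

Definition cnt (R S : {set V * V}) (u v : V) : nat := #|nbr R u :&: nbr (rel_tr S) v|.

Definition is_coherent_configuration (Rs : {set {set V * V}}) : Prop :=
  [/\ partition Rs [set: V * V],
      (exists D : {set {set V * V}}, D \subset Rs /\ cover D = rel_diag [set: V]),
      (forall R, R \in Rs -> rel_tr R \in Rs) &
      (forall R S T, R \in Rs -> S \in Rs -> T \in Rs ->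
         forall u v u' v', (u, v) \in T -> (u', v') \in T -> cnt R S u v = cnt R S u' v')].

(* intersection number c_{RS}^T, evaluated at some pair of T (well defined by coherence) *)
Definition cnum (R S T : {set V * V}) : nat :=
  if [pick p in T] is Some p then cnt R S p.1 p.2 else 0.

Definition is_fiber (Rs : {set {set V * V}}) (X : {set V}) : Prop := rel_diag X \in Rs.

Definition rels_between (Rs : {set {set V * V}}) (X Y : {set V}) : {set {set V * V}} :=
  [set R in Rs | R \subset setX X Y].

Definition valency (X : {set V}) (R : {set V * V}) : nat := cnum R (rel_tr R) (rel_diag X).

Definition cprod (Rs : {set {set V * V}}) (A B : {set V * V}) : {set {set V * V}} :=
  [set R in Rs | 0 < cnum A B R].

End CC.

From mathcomp Require Import all_boot.
Set Implicit Arguments. Unset Strict Implicit. Unset Printing Implicit Defensive.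

(* Pick (u, v) in R1 and a common S-neighbour y of u and v.  Every z with
   (z, y) in T lies in R(u) and in R(v), because S T^t = {R}; there are
   exactly d_T such z, since |X| = |Y| forces d_{T^t} = d_T by counting T
   row- and column-wise.  The second inequality is the first one applied to
   T S^t = {R^t}. *)

Section Relations.
Variable V : finType.
Implicit Types A B : {set V * V}.

Lemma rel_trK : involutive (@rel_tr V).
Proof. by move=> A; apply/setP => -[a b]; rewrite !inE. Qed.

Lemma card_rel_tr A : #|rel_tr A| = #|A|.
Proof.
have -> : rel_tr A = (fun p : V * V => (p.2, p.1)) @^-1: A.
  by apply/setP => p; rewrite !inE.
by apply: card_preimset => -[a b] [c d] [-> ->].
Qed.

Lemma card_nbr_sum A : #|A| = \sum_x #|nbr A x|.
Proof.
under eq_bigr => x _ do rewrite -sum1_card big_mkcond /=.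
rewrite pair_bigA -sum1_card big_mkcond /=.
by apply: eq_bigr => -[x z] _; rewrite inE.
Qed.

Lemma cnt_tr A B u v : cnt (rel_tr B) (rel_tr A) v u = cnt A B u v.
Proof. by rewrite /cnt rel_trK setIC. Qed.

Lemma rels_between_rel (Rs : {set {set V * V}}) X Y A :
  A \in rels_between Rs X Y -> A \in Rs.
Proof. by rewrite inE => /andP[]. Qed.

End Relations.

Section CoherentConfiguration.
Variables (V : finType) (Rs : {set {set V * V}}).
Hypothesis CC : is_coherent_configuration Rs.
Implicit Types A B P Q : {set V * V}.

Lemma rel_tr_cc A : A \in Rs -> rel_tr A \in Rs.
Proof. by case: CC => _ _ + _; apply. Qed.

Lemma cc_cover p : exists2 Q, Q \in Rs & p \in Q.
Proof.
case: CC => /and3P[/eqP covRs _ _] _ _ _.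
have /bigcupP[Q QRs pQ] : p \in cover Rs by rewrite covRs inE.
by exists Q.
Qed.

Lemma cc_neq0 Q : Q \in Rs -> exists p, p \in Q.
Proof.
case: CC => /and3P[_ _ Rs0] _ _ _ QRs.
by apply/set0Pn; apply: contraNneq Rs0 => <-.
Qed.

Lemma cnumE A B Q u v : A \in Rs -> B \in Rs -> Q \in Rs ->
  (u, v) \in Q -> cnum A B Q = cnt A B u v.
Proof.
case: CC => _ _ _ coh ARs BRs QRs uvQ; rewrite /cnum.
case: pickP => [[u' v'] uvQ'|/(_ (u, v))]; last by rewrite uvQ.
exact: coh uvQ' uvQ.
Qed.

Lemma cnum_tr A B Q : A \in Rs -> B \in Rs -> Q \in Rs ->
  cnum (rel_tr B) (rel_tr A) (rel_tr Q) = cnum A B Q.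
Proof.
move=> ARs BRs QRs; have [[u v] uvQ] := cc_neq0 QRs.
have vuQt : (v, u) \in rel_tr Q by rewrite inE.
rewrite (cnumE _ _ (rel_tr_cc QRs) vuQt) ?rel_tr_cc //.
by rewrite (cnumE _ _ _ uvQ) // cnt_tr.
Qed.

Lemma mem_rel_tr_cc P : (rel_tr P \in Rs) = (P \in Rs).
Proof. by apply/idP/idP => /rel_tr_cc //; rewrite rel_trK. Qed.

Lemma mem_cprod_tr A B P : A \in Rs -> B \in Rs ->
  (P \in cprod Rs (rel_tr B) (rel_tr A)) = (rel_tr P \in cprod Rs A B).
Proof.
move=> ARs BRs; rewrite !inE mem_rel_tr_cc.
case PRs: (P \in Rs) => //=.
by rewrite -(cnum_tr ARs BRs) ?rel_trK // rel_tr_cc.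
Qed.

Lemma cprod_tr1 A B Q : A \in Rs -> B \in Rs -> cprod Rs A B = [set Q] ->
  cprod Rs (rel_tr B) (rel_tr A) = [set rel_tr Q].
Proof.
move=> ARs BRs ABQ; apply/setP => P.
by rewrite mem_cprod_tr // ABQ !inE -(inj_eq (inv_inj (@rel_trK V))) rel_trK.
Qed.

Lemma cprod1_comp A B Q x y z : A \in Rs -> B \in Rs -> cprod Rs A B = [set Q] ->
  (x, y) \in A -> (y, z) \in B -> (x, z) \in Q.
Proof.
move=> ARs BRs ABQ xyA yzB; have [P PRs xzP] := cc_cover (x, z).
suff : P \in cprod Rs A B by rewrite ABQ inE => /eqP <-.
rewrite inE PRs (cnumE _ _ _ xzP) // /cnt card_gt0.
by apply/set0Pn; exists y; rewrite !inE /= xyA.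
Qed.

Lemma card_nbr_valency X A x : is_fiber Rs X -> A \in Rs -> x \in X ->
  #|nbr A x| = valency X A.
Proof.
move=> FX ARs xX.
rewrite /valency (cnumE (u := x) (v := x)) ?rel_tr_cc ?inE ?eqxx //.
by rewrite /cnt rel_trK setIid.
Qed.

Lemma card_rel_between X Y A : is_fiber Rs X -> A \in rels_between Rs X Y ->
  #|A| = #|X| * valency X A.
Proof.
rewrite inE => FX /andP[ARs AXY].
rewrite card_nbr_sum (bigID (mem X)) /= [s in _ + s]big1 => [|x xX]; last first.
  apply/eqP; rewrite cards_eq0; apply/eqP/setP => z; rewrite !inE.
  by apply: contraNF xX => /(subsetP AXY); rewrite inE => /andP[].
by rewrite addn0 -sum_nat_const; apply: eq_bigr => x; apply: card_nbr_valency.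
Qed.

Lemma rel_tr_between X Y A :
  A \in rels_between Rs X Y -> rel_tr A \in rels_between Rs Y X.
Proof.
rewrite !inE => /andP[ARs AXY]; rewrite rel_tr_cc //=.
by apply/subsetP => -[a b]; rewrite !inE => /(subsetP AXY); rewrite inE andbC.
Qed.

Lemma card_nbr_tr_valency X Y A y : is_fiber Rs X -> is_fiber Rs Y ->
  #|X| = #|Y| -> A \in rels_between Rs X Y -> y \in Y ->
  #|nbr (rel_tr A) y| = valency X A.
Proof.
move=> FX FY XY AXY yY.
have AtYX := rel_tr_between AXY.
have Y0 : 0 < #|Y| by apply/card_gt0P; exists y.
rewrite (card_nbr_valency FY (rels_between_rel AtYX) yY); apply/eqP.
rewrite -(eqn_pmul2l Y0) -(card_rel_between FY AtYX) card_rel_tr.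
by rewrite (card_rel_between FX AXY) XY.
Qed.

Lemma valency_leq_cnum_cprod X Y A B Q P :
  is_fiber Rs X -> is_fiber Rs Y -> #|X| = #|Y| ->
  A \in rels_between Rs X Y -> B \in rels_between Rs X Y ->
  cprod Rs A (rel_tr B) = [set Q] -> P \in cprod Rs A (rel_tr A) ->
  valency X B <= cnum Q (rel_tr Q) P.
Proof.
move=> FX FY XY AXY BXY ABQ; rewrite inE => /andP[PRs].
have BtRs := rel_tr_cc (rels_between_rel BXY).
move: AXY; rewrite inE => /andP[ARs AXY]; have QRs : Q \in Rs.
  by have := set11 Q; rewrite -ABQ inE => /andP[].
have [[u v] uvP] := cc_neq0 PRs.
rewrite !(cnumE _ _ _ uvP) ?rel_tr_cc // /cnt card_gt0 => /set0Pn[y].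
rewrite !inE /= => /andP[uyA vyA].
have yY : y \in Y by have := subsetP AXY _ uyA; rewrite inE => /andP[].
rewrite -(card_nbr_tr_valency FX FY XY BXY yY) rel_trK.
apply/subset_leq_card/subsetP => z; rewrite [z \in _]inE => yzBt.
by rewrite !inE !(cprod1_comp ARs BtRs ABQ _ yzBt).
Qed.

End CoherentConfiguration.

Theorem lemma3p6 (V : finType) (Rs : {set {set V * V}}) (X Y : {set V})
  (S T R : {set V * V}) :
  is_coherent_configuration Rs ->
  is_fiber Rs X -> is_fiber Rs Y ->
  prime #|X| -> #|X| = #|Y| ->
  2 < #|rels_between Rs X X| ->
  1 < #|rels_between Rs X Y| ->
  S \in rels_between Rs X Y -> T \in rels_between Rs X Y -> R \in Rs ->
  cprod Rs S (rel_tr T) = [set R] ->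
  (forall R1, R1 \in cprod Rs S (rel_tr S) ->
     valency X T <= cnum R (rel_tr R) R1) /\
  (forall R2, R2 \in cprod Rs T (rel_tr T) ->
     valency X S <= cnum (rel_tr R) R R2).
Proof.
move=> CC FX FY _ XY _ _ SXY TXY _ STR; split => [R1 R1SS|R2 R2TT].
  exact: (valency_leq_cnum_cprod CC FX FY XY SXY TXY STR R1SS).
have TSR : cprod Rs T (rel_tr S) = [set rel_tr R].
  have TtRs := rel_tr_cc CC (rels_between_rel TXY).
  by rewrite -(rel_trK T) (cprod_tr1 CC (rels_between_rel SXY) TtRs STR).
rewrite -{2}(rel_trK R).
exact: (valency_leq_cnum_cprod CC FX FY XY TXY SXY TSR R2TT).
Qed.
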